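(* Let $t \geq 2$ and $n \geq 1$ be integers and let $x = \left[\frac{nt-1}{t-1}\right]$. Then $x \leq R_{t-1,t}(K_{1,n}) \leq x+1$. Moreover, if $x$ is even, then $R_{t-1,t}(K_{1,n}) = x+1$.
   Context: $[a]$ denotes the integer part (floor) of a real number $a$. $K_{1,n}$ is the star with $n$ edges. For a graph $G$ and integers $1 \leq s < t$, $R_{s,t}(G)$ is the smallest positive integer $N$ such that every coloring of the edges of the complete graph $K_N$ with $t$ colors contains a (not necessarily induced) subgraph isomorphic to $G$ whose edges use at most $s$ distinct colors. *)

From mathcomp Require Import all_boot.
Set Implicit Arguments. Unset Strict Implicit. Unset Printing Implicit Defensive.

(* An edge t-colouring of K_N: a colour in 'I_t for every 2-subset {u,v}
   of 'I_N (values on other subsets are irrelevant). *)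
Definition edge_colouring (N t : nat) := {set 'I_N} -> 'I_t.

Definition colours_used (V : finType) (e : rel V) (N t : nat)
  (c : edge_colouring N t) (f : V -> 'I_N) : {set 'I_t} :=
  [set c [set f u; f v] | u in V, v in V & e u v].

Definition ramsey_prop (s t : nat) (V : finType) (e : rel V) (N : nat) : Prop :=
  forall c : edge_colouring N t,
    exists f : V -> 'I_N, injective f /\ #|colours_used e c f| <= s.

Definition is_Rst (s t : nat) (V : finType) (e : rel V) (R : nat) : Prop :=
  0 < R /\ ramsey_prop s t e R /\
  forall M, 0 < M -> ramsey_prop s t e M -> R <= M.

Definition star_rel (n : nat) : rel 'I_n.+1 :=
  fun u v => (u == ord0) != (v == ord0).

From mathcomp Require Import all_boot zify.
From Stdlib Require Import Classical_Prop.
Set Implicit Arguments. Unset Strict Implicit. Unset Printing Implicit Defensive.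

(* Upper bound: at a fixed vertex v of K_N, each of the N - 1 edges at v misses
   t - 1 of the t colours, so some colour is missed by at least n of them as
   soon as t (n - 1) < (N - 1)(t - 1); those edges form a star with t - 1
   colours.
   Lower bound for even N <= x: K_N has a proper edge colouring with N - 1
   labels.  Cut the labels into t consecutive blocks, all but the last of size
   q = N - n, and colour each edge by the block of its label.  The n edges of a
   star carry n distinct labels, while only N - 1 - q = n - 1 labels lie
   outside any given block, so every star sees all t colours. *)

(* The 1-factorisation of K_(m+1), m odd: the vertices are Z_m plus a point m
   at infinity, {a, b} gets label a + b and {a, m} gets label 2a (mod m). *)
Definition cyclic_label (m a b : nat) : nat :=
  if (a < m) && (b < m) then (a + b) %% m else (2 * minn a b) %% m.

Lemma cyclic_labelC m a b : cyclic_label m a b = cyclic_label m b a.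
Proof. by rewrite /cyclic_label andbC addnC minnC. Qed.

Lemma cyclic_label_lt m a b : 0 < m -> cyclic_label m a b < m.
Proof. by move=> m_gt0; rewrite /cyclic_label; case: ifP => _; rewrite ltn_pmod. Qed.

Lemma double_mod_inj m a b : odd m -> a < m -> b < m ->
  (2 * a) %% m = (2 * b) %% m -> a = b.
Proof.
move=> odd_m am bm eq2.
(* uphalf m is the inverse of 2 modulo m *)
have half_double y : y < m -> y = (uphalf m * ((2 * y) %% m)) %% m.
  move=> ym; rewrite modnMmr mulnA muln2 odd_uphalfK // mulSn mulnC addnC.
  by rewrite modnMDl modn_small.
by rewrite (half_double a am) (half_double b bm) eq2.
Qed.

Lemma cyclic_label_inj m v w w' : odd m -> v <= m -> w <= m -> w' <= m ->
  w != v -> w' != v -> cyclic_label m v w = cyclic_label m v w' -> w = w'.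
Proof.
move=> odd_m vm wm w'm wv w'v; rewrite /cyclic_label.
have [v_lt|v_ge] := ltnP v m; last first.
  have v_eq : v = m by apply/eqP; rewrite eqn_leq vm.
  subst v; have w_lt : w < m by rewrite ltn_neqAle wv.
  have w'_lt : w' < m by rewrite ltn_neqAle w'v.
  rewrite /= (minn_idPr (ltnW w_lt)) (minn_idPr (ltnW w'_lt)).
  exact: double_mod_inj.
have two_v : 2 * minn v m = v + v by rewrite (minn_idPl (ltnW v_lt)) mul2n addnn.
rewrite /=; have [w_lt|w_ge] := ltnP w m; have [w'_lt|w'_ge] := ltnP w' m => /=.
- by move/eqP; rewrite eqn_modDl !modn_small // => /eqP.
- have w'm_eq : w' = m by apply/eqP; rewrite eqn_leq w'm.
  rewrite w'm_eq two_v => /eqP; rewrite eqn_modDl !modn_small // => /eqP wv_eq.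
  by rewrite wv_eq eqxx in wv.
- have wm_eq : w = m by apply/eqP; rewrite eqn_leq wm.
  rewrite wm_eq two_v => /esym /eqP; rewrite eqn_modDl !modn_small // => /eqP w'v_eq.
  by rewrite w'v_eq eqxx in w'v.
- by move=> _; apply/eqP; rewrite eqn_leq (leq_trans wm w'_ge) (leq_trans w'm w_ge).
Qed.

Lemma set2_eq (T : finType) (a b c d : T) : a != b ->
  [set a; b] = [set c; d] -> (a = c /\ b = d) \/ (a = d /\ b = c).
Proof.
move=> ab eq_ab_cd; move: (set21 a b) (set22 a b); rewrite eq_ab_cd !in_set2.
case/orP=> /eqP a_eq; case/orP=> /eqP b_eq; subst; [|by left|by right|];
  by rewrite eqxx in ab.
Qed.

Definition pair_colouring N t (col : 'I_N -> 'I_N -> 'I_t.+1) : edge_colouring N t.+1 :=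
  fun S => if [pick p : 'I_N * 'I_N | S == [set p.1; p.2]] is Some p
           then col p.1 p.2 else ord0.

Lemma pair_colouring_set2 N t (col : 'I_N -> 'I_N -> 'I_t.+1) a b :
  (forall a b, col a b = col b a) -> a != b -> pair_colouring col [set a; b] = col a b.
Proof.
move=> colC ab; rewrite /pair_colouring; case: pickP => [p /eqP p_ab | no_pair].
  by case: (set2_eq ab p_ab) => [[-> ->]|[-> ->]].
by move: (no_pair (a, b)); rewrite /= eqxx.
Qed.

Lemma colours_used_star n N t (c : edge_colouring N t) (f : 'I_n.+1 -> 'I_N) :
  colours_used (@star_rel n) c f = [set c [set f ord0; f (lift ord0 i)] | i : 'I_n].
Proof.
apply/setP => z; apply/imset2P/imsetP => [[u w _] | [i _ ->]].
  rewrite inE /star_rel.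
  case: (unliftP ord0 u) => [i ->|->]; case: (unliftP ord0 w) => [j ->|->];
    rewrite ?eqxx ?lift_eqF //= => _ ->; last by exists j.
  by exists i; rewrite // setUC.
by exists ord0 (lift ord0 i); rewrite // inE /star_rel eqxx lift_eqF.
Qed.

Lemma ramsey_propW s t (V : finType) (e : rel V) M N :
  M <= N -> ramsey_prop s t e M -> ramsey_prop s t e N.
Proof.
move=> MN ramsey_M c.
have [f [f_inj used_le]] := ramsey_M (fun S => c (widen_ord MN @: S)).
exists (widen_ord MN \o f); split.
  by move=> a b /(congr1 val) /= /val_inj /f_inj.
apply: leq_trans used_le; apply: subset_leq_card; apply/subsetP => z.
case/imset2P => u w u_in w_in ->; apply/imset2P; exists u w => //.
by rewrite imsetU1 imset_set1.
Qed.

Lemma ramsey_prop_card s t (V : finType) (e : rel V) N :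
  ramsey_prop s t.+1 e N -> #|V| <= N.
Proof.
move=> /(_ (fun _ => ord0)) [f [f_inj _]].
by have := leq_card f f_inj; rewrite card_ord.
Qed.

(* Compress the gap [p, p + q) away: values above it are shifted down by q. *)
Lemma leq_inj_avoid_interval n m p q (F : 'I_n -> nat) :
  injective F -> (forall i, F i < m) -> p + q <= m ->
  (forall i, ~~ (p <= F i < p + q)) -> n <= m - q.
Proof.
move=> F_inj F_lt pq_le F_out.
pose G i := if F i < p then F i else F i - q.
have G_lt i : G i < m - q.
  by rewrite /G; move: (F_out i) (F_lt i); case: (ltnP (F i) p); lia.
have G_inj : injective (fun i => Ordinal (G_lt i)).
  move=> i j /(congr1 val) /=; rewrite /G => eqG; apply: F_inj.
  by move: eqG (F_out i) (F_out j); case: (ltnP (F i) p); case: (ltnP (F j) p); lia.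
by have := leq_card _ G_inj; rewrite !card_ord.
Qed.

Definition block_colour t q k : 'I_t.+1 := inord (minn (k %/ q) t).

Lemma block_colour_interval t q (c : 'I_t.+1) k :
  0 < q -> c * q <= k < c * q + q -> block_colour t q k = c.
Proof.
move=> q_gt0 /andP [lo hi]; apply: val_inj; rewrite /block_colour.
have -> : k %/ q = c.
  by apply/eqP; rewrite eqn_leq -ltnS ltn_divLR // leq_divRL // lo mulSn addnC hi.
by rewrite /= (minn_idPl _) ?inordK // -ltnS.
Qed.

Lemma star_ramsey_fails_even t n N : 0 < n -> ~~ odd N -> N * t <= n * t.+1 - 1 ->
  ~ ramsey_prop t t.+1 (@star_rel n) N.
Proof.
move=> n_gt0 even_N N_small; have [N_le_n | n_lt_N] := leqP N n.
  by move/ramsey_prop_card; rewrite card_ord; lia.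
case: N even_N N_small n_lt_N => [|m] //= odd_m; rewrite negbK in odd_m.
move=> N_small n_lt_N.
set q := m.+1 - n.
have q_gt0 : 0 < q by rewrite subn_gt0.
have m_gt0 : 0 < m by case: m odd_m {N_small n_lt_N q q_gt0}.
have blocks_fit : t.+1 * q <= m.
  by rewrite /q; nia.
pose col := pair_colouring (fun a b : 'I_m.+1 => block_colour t q (cyclic_label m a b)).
move=> /(_ col) [f [f_inj used_le]].
have [c c_unused] : exists c, c \notin colours_used (@star_rel n) col f.
  have : 0 < #|~: colours_used (@star_rel n) col f|.
    by move: (cardsC (colours_used (@star_rel n) col f)); rewrite card_ord; lia.
  by case/card_gt0P => c; rewrite inE; exists c.
pose F i := cyclic_label m (f ord0) (f (lift ord0 i)).
have leaf_neq i : f (lift ord0 i) != f ord0 by rewrite (inj_eq f_inj) lift_eqF.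
have f_le u : f u <= m by rewrite -ltnS.
have F_inj : injective F.
  move=> i j /(cyclic_label_inj odd_m (f_le _) (f_le _) (f_le _)).
  by move=> /(_ (leaf_neq i) (leaf_neq j)) /val_inj /f_inj /lift_inj.
have F_out i : ~~ (c * q <= F i < c * q + q).
  apply: contra c_unused => F_in; rewrite colours_used_star; apply/imsetP.
  exists i => //; rewrite /col pair_colouring_set2 ?(block_colour_interval (c := c)) //.
    by move=> a b; rewrite cyclic_labelC.
  by rewrite eq_sym.
have := leq_inj_avoid_interval F_inj (fun i => cyclic_label_lt _ _ m_gt0) _ F_out.
have : c * q + q <= m.
  by apply: leq_trans blocks_fit; rewrite addnC -mulSn leq_mul2r ltn_ord orbT.
rewrite /q; lia.
Qed.

Lemma sum_card_other_colour (T : finType) k (col : T -> 'I_k.+1) v :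
  \sum_(c : 'I_k.+1) #|[set u | u != v & c != col u]| = #|T|.-1 * k.
Proof.
have sum_neq (k' : nat) : \sum_(u : T) (if u != v then k' else 0) = #|T|.-1 * k'.
  rewrite -big_mkcond /= -(cardC1 v) -sum_nat_const.
  by apply: eq_bigl => u; rewrite !inE.
transitivity (\sum_(c : 'I_k.+1) \sum_(u : T) ((u != v) && (c != col u) : nat)).
  apply: eq_bigr => c _; rewrite -sum1_card big_mkcond /=.
  by apply: eq_bigr => u _; rewrite inE; case: (_ && _).
rewrite exchange_big /= -sum_neq; apply: eq_bigr => u _; case: (u != v) => /=.
  rewrite (bigD1 (col u)) //= eqxx add0n.
  under eq_bigr => c ne do rewrite ne.
  by rewrite sum1_card cardC1 card_ord.
by rewrite big1.
Qed.

Lemma star_embedding n (T : finType) (v : T) (S : {set T}) :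
  v \notin S -> n <= #|S| ->
  exists f : 'I_n.+1 -> T,
    [/\ injective f, f ord0 = v & forall i, f (lift ord0 i) \in S].
Proof.
move=> vS nS.
pose g i : T := enum_val (widen_ord nS i).
have g_in i : g i \in S by exact: enum_valP.
pose f u := if unlift ord0 u is Some i then g i else v.
have f_lift i : f (lift ord0 i) = g i by rewrite /f liftK.
have g_neq i : g i != v by apply: contraNneq vS => <-.
exists f; split => [a b||i]; rewrite ?f_lift ?/f ?unlift_none //.
case: (unliftP ord0 a) => [i ->|->]; case: (unliftP ord0 b) => [j ->|->];
  rewrite ?f_lift /f ?unlift_none //.
- by move/enum_val_inj/(congr1 val) => /= /val_inj ->.
- by move/eqP; rewrite (negbTE (g_neq i)).
- by move/esym/eqP; rewrite (negbTE (g_neq j)).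
Qed.

Lemma star_ramsey_holds t n N : 0 < n -> n * t.+1 - 1 < N * t ->
  ramsey_prop t t.+1 (@star_rel n) N.
Proof.
case: N => [|N] n_gt0 N_big c; first by rewrite mul0n in N_big.
pose v : 'I_N.+1 := ord0.
pose S c0 := [set u | u != v & c0 != c [set v; u]].
have [c0 big_S] : exists c0, n <= #|S c0|.
  apply/existsP; apply: contraLR N_big; rewrite negb_exists => /forallP small_S.
  have : \sum_(c0 : 'I_t.+1) #|S c0| <= t.+1 * (n - 1).
    apply: leq_trans (_ : \sum_(c0 : 'I_t.+1) (n - 1) <= _); last first.
      by rewrite sum_nat_const card_ord.
    by apply: leq_sum => c0 _; have := small_S c0; rewrite -ltnNge; lia.
  by rewrite sum_card_other_colour card_ord /= -leqNgt; nia.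
have v_notin : v \notin S c0 by rewrite inE eqxx.
have [f [f_inj f0 f_leaf]] := star_embedding v_notin big_S.
exists f; split => //.
apply: leq_trans (_ : #|[set~ c0]| <= t); last by rewrite cardsC1 card_ord.
rewrite colours_used_star; apply/subset_leq_card/subsetP => _ /imsetP [i _ ->].
by have := f_leaf i; rewrite !inE f0 => /andP [_]; rewrite eq_sym.
Qed.

Lemma is_Rst_threshold s t (V : finType) (e : rel V) L : 0 < L ->
  (forall M, M < L -> ~ ramsey_prop s t e M) -> ramsey_prop s t e L.+1 ->
  exists R, is_Rst s t e R /\ L <= R <= L.+1 /\ (~ ramsey_prop s t e L -> R = L.+1).
Proof.
move=> L_gt0 fails_below holds_above.
have [holds_L | fails_L] := classic (ramsey_prop s t e L).
  exists L; split; last by rewrite leqnn leqnSn.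
  by do 2!split=> //; move=> M _ holds_M; rewrite leqNgt; apply/negP => /fails_below.
exists L.+1; split; last by rewrite leqnSn leqnn.
do 2!split=> //; move=> M _ holds_M; rewrite ltnNge; apply/negP; rewrite leq_eqVlt.
by case/orP => [/eqP M_eq | /fails_below //]; rewrite M_eq in holds_M.
Qed.

Theorem corollary1 (t n : nat) (ht : 2 <= t) (hn : 1 <= n) :
  let x := (n * t - 1) %/ (t - 1) in
  exists R : nat, is_Rst (t - 1) t (@star_rel n) R /\
    x <= R <= x + 1 /\ (~~ odd x -> R = x + 1).
Proof.
case: t ht => [|t] // t_gt0; rewrite [t.+1 - 1]subn1 /= addn1.
set x := (n * t.+1 - 1) %/ t.
have x_gt0 : 0 < x by rewrite divn_gt0 //; nia.
have fails_even N : ~~ odd N -> N <= x -> ~ ramsey_prop t t.+1 (@star_rel n) N.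
  move=> even_N N_le_x; apply: star_ramsey_fails_even => //.
  by apply: leq_trans (leq_divM _ t); rewrite leq_mul2r N_le_x orbT.
have fails_below M : M < x -> ~ ramsey_prop t t.+1 (@star_rel n) M.
  move=> M_lt_x /(ramsey_propW (_ : M <= x - odd x)) holds.
  have even_x' : ~~ odd (x - odd x) by rewrite oddB ?addbb //; case: (odd x) x_gt0.
  apply: fails_even even_x' (leq_subr _ _) (holds _).
  by move: M_lt_x; case: (odd x); lia.
have holds_above := star_ramsey_holds hn (ltn_ceil (n * t.+1 - 1) t_gt0).
have [R [R_is_Rst [R_bounds R_even]]] := is_Rst_threshold x_gt0 fails_below holds_above.
exists R; do 2!split=> //.
by move=> even_x; apply/R_even/fails_even.
Qed.
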